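(* The logic $\mathsf{ICK}\oplus(p\mathrel{\Box\!\!\!\rightarrow} p)\oplus(((p\mathrel{\Box\!\!\!\rightarrow} q)\wedge(q\mathrel{\Box\!\!\!\rightarrow} r))\to(p\mathrel{\Box\!\!\!\rightarrow} r))\oplus((p\to q)\to(p\mathrel{\Box\!\!\!\rightarrow} q))$ is sound and complete with respect to the conditional frames $(X,\leq,\mathcal{R})$ satisfying, for all $x\in X$ and upsets $a,b$: $R_a[x]\subseteq{\uparrow}x\cap a$, and $R_a[x]\subseteq b$ implies $R_a[x]\subseteq{\uparrow}R_b[x]$.
   Context: Formulas: $\phi ::= p\mid\bot\mid\phi\wedge\phi\mid\phi\vee\phi\mid\phi\to\phi\mid\phi\mathrel{\Box\!\!\!\rightarrow}\phi$. $\mathsf{ICK}\oplus\Gamma$ is the smallest set containing intuitionistic propositional logic, $\Gamma$, $(p\mathrel{\Box\!\!\!\rightarrow}(q\wedge r))\leftrightarrow((p\mathrel{\Box\!\!\!\rightarrow} q)\wedge(p\mathrel{\Box\!\!\!\rightarrow} r))$ and $(p\mathrel{\Box\!\!\!\rightarrow}\top)\leftrightarrow\top$, closed under uniform substitution, modus ponens and congruence rules for both arguments of $\mathrel{\Box\!\!\!\rightarrow}$. A conditional frame is $(X,\leq,\mathcal{R})$, $(X,\leq)$ a nonempty preorder, $\mathcal{R}=\{R_a\mid a\text{ an upset}\}$ with $(\leq\circ R_a)\subseteq(R_a\circ\leq)$; valuations assign upsets to letters and $x\models\phi\mathrel{\Box\!\!\!\rightarrow}\psi$ iff every $y$ with $xR_{V(\phi)}y$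 satisfies $\psi$. *)

Inductive form : Type :=
| Var : nat -> form
| Bot : form
| And : form -> form -> form
| Or : form -> form -> form
| Imp : form -> form -> form
| Cond : form -> form -> form.

Definition Top : form := Imp Bot Bot.
Definition Iff (a b : form) : form := And (Imp a b) (Imp b a).

Fixpoint subst (s : nat -> form) (f : form) : form :=
  match f with
  | Var n => s n
  | Bot => Bot
  | And a b => And (subst s a) (subst s b)
  | Or a b => Or (subst s a) (subst s b)
  | Imp a b => Imp (subst s a) (subst s b)
  | Cond a b => Cond (subst s a) (subst s b)
  end.

Inductive ipc_axiom : form -> Prop :=
| ax_K a b : ipc_axiom (Imp a (Imp b a))
| ax_S a b c : ipc_axiom (Imp (Imp a (Imp b c)) (Imp (Imp a b) (Imp a c)))
| ax_andE1 a b : ipc_axiom (Imp (And a b) a)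
| ax_andE2 a b : ipc_axiom (Imp (And a b) b)
| ax_andI a b : ipc_axiom (Imp a (Imp b (And a b)))
| ax_orI1 a b : ipc_axiom (Imp a (Or a b))
| ax_orI2 a b : ipc_axiom (Imp b (Or a b))
| ax_orE a b c : ipc_axiom (Imp (Imp a c) (Imp (Imp b c) (Imp (Or a b) c)))
| ax_efq a : ipc_axiom (Imp Bot a).

Definition p : form := Var 0.
Definition q : form := Var 1.
Definition r : form := Var 2.

Inductive ick_axiom : form -> Prop :=
| ick_C : ick_axiom (Iff (Cond p (And q r)) (And (Cond p q) (Cond p r)))
| ick_N : ick_axiom (Iff (Cond p Top) Top).

Inductive ICK_plus (Gamma : form -> Prop) : form -> Prop :=
| D_ipc f : ipc_axiom f -> ICK_plus Gamma f
| D_ick f : ick_axiom f -> ICK_plus Gamma f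
| D_gamma f : Gamma f -> ICK_plus Gamma f
| D_subst s f : ICK_plus Gamma f -> ICK_plus Gamma (subst s f)
| D_mp a b : ICK_plus Gamma (Imp a b) -> ICK_plus Gamma a -> ICK_plus Gamma b
| D_congL a b c : ICK_plus Gamma (Iff a b) ->
    ICK_plus Gamma (Iff (Cond a c) (Cond b c))
| D_congR a b c : ICK_plus Gamma (Iff a b) ->
    ICK_plus Gamma (Iff (Cond c a) (Cond c b)).

Inductive Gamma511 : form -> Prop :=
| g_id : Gamma511 (Cond p p)
| g_trans : Gamma511 (Imp (And (Cond p q) (Cond q r)) (Cond p r))
| g_imp : Gamma511 (Imp (Imp p q) (Cond p q)).

Definition upset {X : Type} (le : X -> X -> Prop) (a : X -> Prop) : Prop :=
  forall x y, le x y -> a x -> a y.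

(* The family R_a is given as a function of the set a
   (a predicate on X); only its values on upsets matter.  Since sets are
   extensional, R is required to depend only on the extension of a. *)
Record cframe : Type := {
  W :> Type;
  le : W -> W -> Prop;
  R : (W -> Prop) -> W -> W -> Prop;
  W_inhabited : inhabited W;
  le_refl : forall x, le x x;
  le_trans : forall x y z, le x y -> le y z -> le x z;
  R_ext : forall a b : W -> Prop, (forall x, a x <-> b x) ->
            forall x y, R a x y <-> R b x y;
  R_coh : forall a, upset le a ->
            forall x y z, le x y -> R a y z -> exists w, R a x w /\ le w z
}.

Fixpoint sat (F : cframe) (V : nat -> F -> Prop) (x : F) (f : form) : Prop :=
  match f with
  | Var n => V n x
  | Bot => False
  | And a b => sat F V x a /\ sat F V x b
  | Or a b => sat F V x a \/ sat F V x b
  | Imp a b => forall y, le F x y -> sat F V y a -> sat F V y b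
  | Cond a b => forall y, R F (fun z => sat F V z a) x y -> sat F V y b
  end.

Definition valuation (F : cframe) (V : nat -> F -> Prop) : Prop :=
  forall n, upset (le F) (V n).

Definition valid (F : cframe) (f : form) : Prop :=
  forall V, valuation F V -> forall x : F, sat F V x f.

Definition frame511 (F : cframe) : Prop :=
  (forall a, upset (le F) a -> forall x y, R F a x y -> le F x y /\ a y) /\
  (forall a b, upset (le F) a -> upset (le F) b -> forall x,
     (forall y, R F a x y -> b y) ->
     forall y, R F a x y -> exists z, R F b x z /\ le F z y).

From Stdlib Require Import Classical Cantor Lia.

(* Soundness: truth persists along [le], and the three extra axioms are valid
   because of [R_a[x] ⊆ a], [R_a[x] ⊆ ↑x] and the second frame condition.

   Completeness: the worlds of the canonical model are the prime theories.
   For a theory [T] and a formula [φ], the set [T_φ = {t | φ □→ t ∈ T}] is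
   again a theory containing [T] and [φ] (by the extra axioms and ICK's
   conjunction axiom).  Put [x R_a y] iff some theory [T ⊇ x] and some [φ]
   satisfy [T_φ ⊆ y] and every prime extension of [T_φ] lies in [a].  Then
   [R_a[x] ⊆ ↑x ∩ a] is immediate, and if [R_a[x] ⊆ b] the witnesses [T, φ]
   of [x R_a y] also witness [x R_b y].  In the truth lemma for [φ □→ ψ], a
   world [y] with [x R_a y], [a] the truth set of [φ], comes with [T, χ] such
   that [χ □→ φ ∈ T] by the prime extension lemma, and transitivity of [□→]
   turns [φ □→ ψ ∈ x ⊆ T] into [ψ ∈ T_χ ⊆ y]. *)

Set Implicit Arguments.
Unset Strict Implicit.

Definition subset (A B : form -> Prop) : Prop := forall f, A f -> B f.
Notation "A ⊆ B" := (subset A B) (at level 70, no associativity).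

Section Soundness.
Variable F : cframe.

Lemma sat_mono V : valuation F V ->
  forall f x y, le F x y -> sat F V x f -> sat F V y f.
Proof.
  intros HV f; induction f as [n| |a IHa b IHb|a IHa b IHb|a IHa b IHb|a IHa b IHb];
    simpl; intros x y Hxy Hx.
  - exact (HV n x y Hxy Hx).
  - exact Hx.
  - destruct Hx; split; eauto.
  - destruct Hx; [left|right]; eauto.
  - intros z Hyz Hz. apply Hx; [eapply le_trans; eauto | exact Hz].
  - intros z Hyz.
    destruct (R_coh F _ IHa x y z Hxy Hyz) as [w [Hxw Hwz]].
    exact (IHb w z Hwz (Hx w Hxw)).
Qed.

Lemma sat_subst V s f x :
  sat F V x (subst s f) <-> sat F (fun n y => sat F V y (s n)) x f.
Proof.
  revert x; induction f as [n| |a IHa b IHb|a IHa b IHb|a IHa b IHb|a IHa b IHb];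
    simpl; intro x; try tauto.
  - rewrite IHa, IHb; tauto.
  - rewrite IHa, IHb; tauto.
  - split; intros H y Hxy Hy; apply IHb, H; auto; apply IHa; auto.
  - split; intros H y Hy; apply IHb, H; eapply R_ext; try exact Hy;
      intro z; simpl; rewrite IHa; tauto.
Qed.

Lemma valid_mp a b : valid F (Imp a b) -> valid F a -> valid F b.
Proof. intros Hab Ha V HV x. exact (Hab V HV x x (le_refl F x) (Ha V HV x)). Qed.

Lemma valid_subst s f : valid F f -> valid F (subst s f).
Proof.
  intros Hf V HV x. apply sat_subst, Hf.
  intros n y z Hyz. apply sat_mono; assumption.
Qed.

Lemma valid_Iff_sat a b : valid F (Iff a b) ->
  forall V, valuation F V -> forall x, sat F V x a <-> sat F V x b.
Proof.
  intros Hab V HV x. destruct (Hab V HV x) as [Hto Hfrom].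
  split; intro; [apply Hto | apply Hfrom]; auto; apply le_refl.
Qed.

Lemma valid_congL a b c : valid F (Iff a b) -> valid F (Iff (Cond a c) (Cond b c)).
Proof.
  intros Hab V HV x.
  assert (ER := R_ext F _ _ (valid_Iff_sat Hab HV)).
  simpl; split; intros y _ Hy z Hz; apply Hy, ER; exact Hz.
Qed.

Lemma valid_congR a b c : valid F (Iff a b) -> valid F (Iff (Cond c a) (Cond c b)).
Proof.
  intros Hab V HV x.
  simpl; split; intros y _ Hy z Hz; apply (valid_Iff_sat Hab HV); auto.
Qed.

Lemma ipc_axiom_valid f : ipc_axiom f -> valid F f.
Proof.
  intros Hf V HV x; destruct Hf; simpl.
  - intros y _ Ha z Hyz _. exact (sat_mono HV Hyz Ha).
  - intros y _ Habc z Hyz Hab w Hzw Ha.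
    apply (Habc w (le_trans F _ _ _ Hyz Hzw) Ha w (le_refl F w)), Hab; assumption.
  - intros y _ [Ha _]; exact Ha.
  - intros y _ [_ Hb]; exact Hb.
  - intros y _ Ha z Hyz Hb; split; [exact (sat_mono HV Hyz Ha) | exact Hb].
  - intros y _ Ha; left; exact Ha.
  - intros y _ Hb; right; exact Hb.
  - intros y _ Hac z Hyz Hbc w Hzw [Ha|Hb].
    + exact (Hac w (le_trans F _ _ _ Hyz Hzw) Ha).
    + exact (Hbc w Hzw Hb).
  - intros y _ [].
Qed.

Lemma ick_axiom_valid f : ick_axiom f -> valid F f.
Proof.
  intros Hf V HV x; destruct Hf; simpl; split.
  - intros y _ H; split; intros z Hz; apply H; exact Hz.
  - intros y _ [Hq Hr] z Hz; split; auto.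
  - intros y _ _ z _ [].
  - intros y _ _ z _ w _ [].
Qed.

Lemma Gamma511_valid f : frame511 F -> Gamma511 f -> valid F f.
Proof.
  intros [Hup Hcomp] Hf V HV x; destruct Hf; simpl.
  - intros z Hz. exact (proj2 (Hup _ (HV 0) x z Hz)).
  - intros y _ [Hpq Hqr] z Hz.
    destruct (Hcomp _ _ (HV 0) (HV 1) y Hpq z Hz) as [w [Hw Hwz]].
    exact (HV 2 w z Hwz (Hqr w Hw)).
  - intros y _ Hpq z Hz. destruct (Hup _ (HV 0) y z Hz) as [Hyz Hp].
    exact (Hpq z Hyz Hp).
Qed.

End Soundness.

Lemma ICK_plus_sound (Gamma : form -> Prop) (K : cframe -> Prop) :
  (forall F g, K F -> Gamma g -> valid F g) ->
  forall f, ICK_plus Gamma f -> forall F, K F -> valid F f.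
Proof.
  intros HGamma f Hf F HF; induction Hf.
  - apply ipc_axiom_valid; assumption.
  - apply ick_axiom_valid; assumption.
  - apply HGamma; assumption.
  - apply valid_subst; assumption.
  - eapply valid_mp; eassumption.
  - apply valid_congL; assumption.
  - apply valid_congR; assumption.
Qed.

Fixpoint form_code (f : form) : nat :=
  match f with
  | Var n => to_nat (0, n)
  | Bot => to_nat (1, 0)
  | And a b => to_nat (2, to_nat (form_code a, form_code b))
  | Or a b => to_nat (3, to_nat (form_code a, form_code b))
  | Imp a b => to_nat (4, to_nat (form_code a, form_code b))
  | Cond a b => to_nat (5, to_nat (form_code a, form_code b))
  end.

Lemma to_nat_inj x y : to_nat x = to_nat y -> x = y.
Proof. intro H. rewrite <- (cancel_of_to x), <- (cancel_of_to y), H. reflexivity. Qed.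

Lemma form_code_inj f g : form_code f = form_code g -> f = g.
Proof.
  revert g; induction f; intros g; destruct g; cbn [form_code]; intro H;
    apply to_nat_inj in H; try discriminate; try congruence;
  match type of H with (_, ?a) = (_, ?b) =>
    assert (E : a = b) by congruence end;
  apply to_nat_inj in E; injection E; intros; f_equal; auto.
Qed.

Section Theories.
Variable Gamma : form -> Prop.
Local Notation derivable := (ICK_plus Gamma).

Lemma derivable_Imp_refl a : derivable (Imp a a).
Proof.
  eapply D_mp; [eapply D_mp|].
  - apply D_ipc, (ax_S a (Imp a a) a).
  - apply D_ipc, ax_K.
  - apply D_ipc, ax_K.
Qed.

Lemma derivable_Imp_elim a b : derivable (Imp (And (Imp a b) a) b).
Proof.
  eapply D_mp; [eapply D_mp|].
  - apply D_ipc, (ax_S (And (Imp a b) a) a b).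
  - apply D_ipc, ax_andE1.
  - apply D_ipc, ax_andE2.
Qed.

Record theory (T : form -> Prop) : Prop := {
  theory_derivable : forall f, derivable f -> T f;
  theory_mp : forall a b, T (Imp a b) -> T a -> T b }.

Record prime_theory (P : form -> Prop) : Prop := {
  prime_theory_theory : theory P;
  prime_theory_consistent : ~ P Bot;
  prime_theory_Or : forall a b, P (Or a b) -> P a \/ P b }.

Lemma derivable_theory : theory derivable.
Proof. split; [auto | exact (D_mp Gamma)]. Qed.

Lemma theory_derivable_Imp T a b : theory T -> derivable (Imp a b) -> T a -> T b.
Proof. intros HT Hab Ha. exact (theory_mp HT (theory_derivable HT Hab) Ha). Qed.

Lemma theory_derivable_Imp2 T a b c :
  theory T -> derivable (Imp a (Imp b c)) -> T a -> T b -> T c.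
Proof.
  intros HT Habc Ha Hb.
  exact (theory_mp HT (theory_derivable_Imp HT Habc Ha) Hb).
Qed.

Lemma theory_And T a b : theory T -> T a -> T b -> T (And a b).
Proof. intro HT; apply theory_derivable_Imp2; [exact HT | apply D_ipc, ax_andI]. Qed.

Lemma theory_eq T T' : theory T -> (forall f, T f <-> T' f) -> theory T'.
Proof.
  intros HT E; split.
  - intros f Hf; apply E, (theory_derivable HT Hf).
  - intros a b Hab Ha; apply E. apply (theory_mp HT (proj2 (E _) Hab)), E, Ha.
Qed.

Definition extend (T : form -> Prop) (a : form) : form -> Prop :=
  fun t => T (Imp a t).

Lemma theory_extend T a : theory T -> theory (extend T a).
Proof.
  intro HT; split; unfold extend.
  - intros f Hf. apply HT. eapply D_mp; [apply D_ipc, ax_K | exact Hf].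
  - intros b c Hbc Hb.
    exact (theory_derivable_Imp2 HT (D_ipc _ _ (ax_S a b c)) Hbc Hb).
Qed.

Lemma subset_extend T a : theory T -> T ⊆ extend T a.
Proof. intros HT f Hf. exact (theory_derivable_Imp HT (D_ipc _ _ (ax_K f a)) Hf). Qed.

Lemma extend_self T a : theory T -> extend T a a.
Proof. intro HT; apply HT, derivable_Imp_refl. Qed.

Section Lindenbaum.
Variables (T : form -> Prop) (psi : form).
Hypotheses (HT : theory T) (HTpsi : ~ T psi).

(* Stage [m + 1] adds the formula with code [m] as a hypothesis, unless that
   would make [psi] derivable. *)
Fixpoint lindenbaum_chain (m : nat) : form -> Prop :=
  match m with
  | 0 => T
  | S m => fun t => lindenbaum_chain m t \/
      exists f, form_code f = m /\ ~ lindenbaum_chain m (Imp f psi) /\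
                lindenbaum_chain m (Imp f t)
  end.

Lemma lindenbaum_chain_theory m :
  theory (lindenbaum_chain m) /\ ~ lindenbaum_chain m psi.
Proof.
  induction m as [|m [IHth IHpsi]]; [split; assumption|].
  destruct (classic (exists f, form_code f = m /\ ~ lindenbaum_chain m (Imp f psi)))
    as [[f0 [Ef0 Hf0]]|Hnone].
  - assert (E : forall t, extend (lindenbaum_chain m) f0 t <-> lindenbaum_chain (S m) t).
    { intro t; simpl; split.
      - intro H; right; exists f0; auto.
      - intros [H|[f [Ef [_ H]]]].
        + apply subset_extend; assumption.
        + assert (f = f0) by (apply form_code_inj; congruence). subst f; exact H. }
    split.
    + exact (theory_eq (theory_extend f0 IHth) E).
    + intro H; apply E in H; exact (Hf0 H).
  - assert (E : forall t, lindenbaum_chain m t <-> lindenbaum_chain (S m) t).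
    { intro t; simpl; split; [auto|].
      intros [H|[f [Ef [Hf _]]]]; [exact H|]. exfalso; eauto. }
    split.
    + exact (theory_eq IHth E).
    + intro H; apply E in H; auto.
Qed.

Lemma lindenbaum_chain_mono m n : m <= n -> lindenbaum_chain m ⊆ lindenbaum_chain n.
Proof. induction 1; intros t Ht; simpl; auto. Qed.

Definition lindenbaum_limit : form -> Prop := fun t => exists m, lindenbaum_chain m t.

Lemma lindenbaum_limit_theory : theory lindenbaum_limit.
Proof.
  split.
  - intros f Hf; exists 0; apply (theory_derivable HT Hf).
  - intros a b [i Hi] [j Hj]. exists (i + j).
    apply (theory_mp (proj1 (lindenbaum_chain_theory (i + j))) (a := a)).
    + apply (lindenbaum_chain_mono (m := i)); [lia | exact Hi].
    + apply (lindenbaum_chain_mono (m := j)); [lia | exact Hj].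
Qed.

Lemma lindenbaum_limit_psi : ~ lindenbaum_limit psi.
Proof. intros [m Hm]. exact (proj2 (lindenbaum_chain_theory m) Hm). Qed.

Lemma lindenbaum_limit_maximal f : ~ lindenbaum_limit (Imp f psi) -> lindenbaum_limit f.
Proof.
  intro Hf. exists (S (form_code f)). simpl. right. exists f. repeat split.
  - intro H; apply Hf; exists (form_code f); exact H.
  - apply (proj1 (lindenbaum_chain_theory _)), derivable_Imp_refl.
Qed.

Lemma lindenbaum_limit_prime : prime_theory lindenbaum_limit.
Proof.
  pose proof lindenbaum_limit_theory as Hth.
  split; [exact Hth| |].
  - intro H; apply lindenbaum_limit_psi.
    exact (theory_derivable_Imp Hth (D_ipc _ _ (ax_efq psi)) H).
  - intros a b Hab. apply NNPP; intro Hnot.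
    assert (Ha : lindenbaum_limit (Imp a psi))
      by (apply NNPP; intro H; apply Hnot; left; apply lindenbaum_limit_maximal, H).
    assert (Hb : lindenbaum_limit (Imp b psi))
      by (apply NNPP; intro H; apply Hnot; right; apply lindenbaum_limit_maximal, H).
    apply lindenbaum_limit_psi.
    apply (theory_mp Hth (a := Or a b)); [|exact Hab].
    exact (theory_derivable_Imp2 Hth (D_ipc _ _ (ax_orE a b psi)) Ha Hb).
Qed.

End Lindenbaum.

Lemma lindenbaum T psi : theory T -> ~ T psi ->
  exists P, prime_theory P /\ T ⊆ P /\ ~ P psi.
Proof.
  intros HT Hpsi. exists (lindenbaum_limit T psi). split; [|split].
  - exact (lindenbaum_limit_prime HT Hpsi).
  - intros t Ht; exists 0; exact Ht.
  - exact (lindenbaum_limit_psi HT Hpsi).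
Qed.

Lemma theory_of_prime_supersets T f : theory T ->
  (forall P, prime_theory P -> T ⊆ P -> P f) -> T f.
Proof.
  intros HT Hprime. apply NNPP; intro Hf.
  destruct (lindenbaum HT Hf) as [P [HP [HTP HPf]]].
  exact (HPf (Hprime P HP HTP)).
Qed.

End Theories.

Section Gamma511_derivations.
Local Notation derivable := (ICK_plus Gamma511).

Definition subst_pqr (a b c : form) : nat -> form :=
  fun n => match n with 0 => a | 1 => b | _ => c end.

Lemma derivable_Cond_refl a : derivable (Cond a a).
Proof. exact (D_subst _ (subst_pqr a a a) _ (D_gamma _ _ g_id)). Qed.

Lemma derivable_Cond_trans a b c :
  derivable (Imp (And (Cond a b) (Cond b c)) (Cond a c)).
Proof. exact (D_subst _ (subst_pqr a b c) _ (D_gamma _ _ g_trans)). Qed.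

Lemma derivable_Cond_of_Imp a b : derivable (Imp (Imp a b) (Cond a b)).
Proof. exact (D_subst _ (subst_pqr a b a) _ (D_gamma _ _ g_imp)). Qed.

Lemma derivable_Cond_And a b c :
  derivable (Imp (And (Cond a b) (Cond a c)) (Cond a (And b c))).
Proof.
  eapply D_mp; [apply D_ipc, ax_andE2|].
  exact (D_subst _ (subst_pqr a b c) _ (D_ick Gamma511 _ ick_C)).
Qed.

Definition cond_image (phi : form) (T : form -> Prop) : form -> Prop :=
  fun t => T (Cond phi t).

Lemma subset_cond_image phi T : theory Gamma511 T -> T ⊆ cond_image phi T.
Proof.
  intros HT f Hf. apply (theory_derivable_Imp HT (derivable_Cond_of_Imp phi f)).
  exact (theory_derivable_Imp HT (D_ipc _ _ (ax_K f phi)) Hf).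
Qed.

Lemma cond_image_self phi T : theory Gamma511 T -> cond_image phi T phi.
Proof. intro HT; apply HT, derivable_Cond_refl. Qed.

Lemma theory_cond_image phi T : theory Gamma511 T -> theory Gamma511 (cond_image phi T).
Proof.
  intro HT; split.
  - intros f Hf. apply subset_cond_image; [exact HT|]. apply HT, Hf.
  - intros a b Hab Ha. unfold cond_image in *.
    assert (Hphi : T (Cond phi (And (Imp a b) a))).
    { exact (theory_derivable_Imp HT (derivable_Cond_And _ _ _) (theory_And HT Hab Ha)). }
    assert (Helim : T (Cond (And (Imp a b) a) b)).
    { apply HT. eapply D_mp; [apply derivable_Cond_of_Imp | apply derivable_Imp_elim]. }
    exact (theory_derivable_Imp HT (derivable_Cond_trans _ _ _)
             (theory_And HT Hphi Helim)).
Qed.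

End Gamma511_derivations.

Record world : Type := {
  world_set :> form -> Prop;
  world_prime : prime_theory Gamma511 world_set }.

Lemma world_theory (x : world) : theory Gamma511 x.
Proof. exact (prime_theory_theory (world_prime x)). Qed.

Definition world_le (x y : world) : Prop := x ⊆ y.

(* The canonical [R_a]; the witness [T] (rather than [x] itself) is what makes
   [R_a] upward closed in its first argument, i.e. the coherence condition. *)
Definition world_R (a : world -> Prop) (x y : world) : Prop :=
  exists T phi, theory Gamma511 T /\ x ⊆ T /\
    (forall w : world, cond_image phi T ⊆ w -> a w) /\ cond_image phi T ⊆ y.

Lemma world_le_refl x : world_le x x.
Proof. intros f Hf; exact Hf. Qed.

Lemma world_le_trans x y z : world_le x y -> world_le y z -> world_le x z.
Proof. intros Hxy Hyz f Hf; auto. Qed.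

Lemma world_R_ext (a b : world -> Prop) : (forall x, a x <-> b x) ->
  forall x y, world_R a x y <-> world_R b x y.
Proof.
  intros E x y; split; intros [T [phi [HT [HxT [Ha Hy]]]]];
    (exists T, phi; split; [exact HT | split; [exact HxT | split; [|exact Hy]]]);
    intros w Hw; apply E, Ha, Hw.
Qed.

Lemma world_R_coh a : upset world_le a ->
  forall x y z, world_le x y -> world_R a y z -> exists w, world_R a x w /\ world_le w z.
Proof.
  intros _ x y z Hxy [T [phi [HT [HyT [Ha Hz]]]]].
  exists z; split; [|apply world_le_refl].
  exists T, phi; split; [exact HT | split; [|split; [exact Ha | exact Hz]]].
  intros f Hf; apply HyT, Hxy, Hf.
Qed.

Definition canonical_frame (w : inhabited world) : cframe :=
  {| W := world; le := world_le; R := world_R; W_inhabited := w;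
     le_refl := world_le_refl; le_trans := world_le_trans;
     R_ext := world_R_ext; R_coh := world_R_coh |}.

Lemma canonical_frame511 w : frame511 (canonical_frame w).
Proof.
  split.
  - intros a _ x y [T [phi [HT [HxT [Ha Hy]]]]]. split.
    + intros f Hf. apply Hy, subset_cond_image, HxT, Hf. exact HT.
    + apply Ha, Hy.
  - intros a b _ _ x Hab y [T [phi [HT [HxT [Ha Hy]]]]].
    exists y; split; [|apply world_le_refl].
    exists T, phi; split; [exact HT | split; [exact HxT | split; [|exact Hy]]].
    intros v Hv. apply Hab. exists T, phi; auto.
Qed.

Lemma world_Bot (x : world) : ~ x Bot.
Proof. exact (prime_theory_consistent (world_prime x)). Qed.

Lemma world_And (x : world) a b : x (And a b) <-> x a /\ x b.
Proof.
  pose proof (world_theory x) as Hx. split.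
  - intro H; split.
    + exact (theory_derivable_Imp Hx (D_ipc _ _ (ax_andE1 a b)) H).
    + exact (theory_derivable_Imp Hx (D_ipc _ _ (ax_andE2 a b)) H).
  - intros [Ha Hb]; exact (theory_And Hx Ha Hb).
Qed.

Lemma world_Or (x : world) a b : x (Or a b) <-> x a \/ x b.
Proof.
  pose proof (world_theory x) as Hx. split.
  - exact (@prime_theory_Or _ _ (world_prime x) a b).
  - intros [Ha|Hb].
    + exact (theory_derivable_Imp Hx (D_ipc _ _ (ax_orI1 a b)) Ha).
    + exact (theory_derivable_Imp Hx (D_ipc _ _ (ax_orI2 a b)) Hb).
Qed.

Lemma world_Imp (x : world) a b :
  x (Imp a b) <-> forall y : world, world_le x y -> y a -> y b.
Proof.
  split.
  - intros Hab y Hxy Ha. exact (theory_mp (world_theory y) (Hxy _ Hab) Ha).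
  - intro H. change (extend x a b).
    apply (theory_of_prime_supersets (theory_extend a (world_theory x))).
    intros P HP Hsub. apply (H {| world_set := P; world_prime := HP |}).
    + intros f Hf. apply Hsub, (subset_extend a (world_theory x)), Hf.
    + apply Hsub, (extend_self a (world_theory x)).
Qed.

Lemma world_Cond (x : world) a b :
  x (Cond a b) <-> forall y : world, world_R (fun z : world => z a) x y -> y b.
Proof.
  split.
  - intros Hab y [T [phi [HT [HxT [Ha Hy]]]]]. apply Hy.
    assert (Hphia : T (Cond phi a)).
    { apply (theory_of_prime_supersets (theory_cond_image phi HT)).
      intros P HP Hsub. exact (Ha {| world_set := P; world_prime := HP |} Hsub). }
    exact (theory_derivable_Imp HT (derivable_Cond_trans phi a b)
             (theory_And HT Hphia (HxT _ Hab))).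
  - intro H. change (cond_image a x b).
    apply (theory_of_prime_supersets (theory_cond_image a (world_theory x))).
    intros P HP Hsub. apply (H {| world_set := P; world_prime := HP |}).
    exists x, a; split; [apply world_theory|].
    split; [apply world_le_refl | split; [|exact Hsub]].
    intros v Hv. apply Hv, (cond_image_self a (world_theory x)).
Qed.

Definition world_val (n : nat) (x : world) : Prop := x (Var n).

Lemma world_val_valuation w : valuation (canonical_frame w) world_val.
Proof. intros n x y Hxy Hx. exact (Hxy _ Hx). Qed.

Lemma canonical_sat w f (x : world) : sat (canonical_frame w) world_val x f <-> x f.
Proof.
  revert x; induction f as [n| |a IHa b IHb|a IHa b IHb|a IHa b IHb|a IHa b IHb];
    intro x; simpl.
  - reflexivity.
  - split; [intros [] | apply world_Bot].
  - rewrite world_And, IHa, IHb; reflexivity.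
  - rewrite world_Or, IHa, IHb; reflexivity.
  - rewrite world_Imp. split; intros H y Hxy Ha; apply IHb, H, IHa; assumption.
  - rewrite world_Cond. split; intros H y Hy; apply IHb, H.
    + exact (proj2 (world_R_ext IHa x y) Hy).
    + exact (proj1 (world_R_ext IHa x y) Hy).
Qed.

Lemma completeness511 f : (forall F, frame511 F -> valid F f) -> ICK_plus Gamma511 f.
Proof.
  intro Hvalid. apply NNPP; intro Hf.
  destruct (lindenbaum (derivable_theory Gamma511) Hf) as [P [HP [_ HPf]]].
  pose (x := {| world_set := P; world_prime := HP |}).
  apply HPf, (canonical_sat (inhabits x) f x), Hvalid;
    [apply canonical_frame511 | apply world_val_valuation].
Qed.

Theorem theorem5p11 : forall f : form,
  ICK_plus Gamma511 f <-> (forall F : cframe, frame511 F -> valid F f).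
Proof.
  intro f; split.
  - intros Hf F HF. exact (ICK_plus_sound (@Gamma511_valid) Hf HF).
  - apply completeness511.
Qed.
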